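(* Let $1\le s<n$ and $A\in M_{s+1,n-s}$ (so $A$ has more than one row), and let $A'\in M_{s,n-s}$ be obtained from $A$ by removing one of its rows. Then $\omega_j(A')\ge\omega_j(A)$ for all $j=1,\dots,n-s$. If moreover the removed row is a rational linear combination of the remaining rows, then $\omega_j(A')=\omega_j(A)$ for all $j=1,\dots,n-s$.
   Context: Higher order exponents of a matrix $M\in M_{m,\ell}$: set $\sigma=m-1$, $N=m+\ell-1$, let $V=\mathbb R^{N+1}$ with basis $e_0,\dots,e_N$, $V_0=\mathrm{span}(e_1,\dots,e_N)$, $V_\bullet=\mathrm{span}(e_{\sigma+1},\dots,e_N)$; $e_I=e_{i_1}\wedge\dots\wedge e_{i_j}$; $\bigwedge(V)$ carries the inner product making $\{e_I\}$ orthonormal. $\mathcal S_{N+1,j}$ is the set of $w=v_1\wedge\dots\wedge v_j$ with $v_1,\dots,v_j\in\mathbb Z^{N+1}$ linearly independent; $\pi_\bullet$ is the orthogonal projection $\bigwedge^jV\to\bigwedge^jV_\bullet$. Index rows of $M$ by $0,\dots,\sigma$ and columns by $\sigma+1,\dots,N$, let $a_i=\sum_{k=\sigma+1}^N m_{i,k}e_k$, and let $R_Mc(w)\in(\bigwedge^{j-1}V_0)^{\sigma+1}$ have $i$-th component $\sum_{J\subset\{1,\dots,N\},\#J=j-1}\langle(e_i+a_i)\wedge e_J,w\rangle e_J$ (Euclidean norm). For $1\le j\le\ell$, $\omega_j(M)$ is the supremum of $v$ such that there exist $w\in\mathcal S_{N+1,j}$ with arbitrarily large $\|\pi_\bullet(w)\|$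 satisfying $\|R_Mc(w)\|<\|\pi_\bullet(w)\|^{-\frac{v+1-j}{j}}$. (Thus $\omega_j(A)$ uses $N=n$, and $\omega_j(A')$ uses $N=n-1$.) *)

From mathcomp Require Import all_boot all_order all_algebra.
From mathcomp Require Import all_classical all_reals all_analysis.
Import Order.TTheory GRing.Theory Num.Theory.
Set Implicit Arguments. Unset Strict Implicit. Unset Printing Implicit Defensive.
Local Open Scope ring_scope.

Section HigherExponents.
Variable R : realType.

Definition dotv (p : nat) (u v : 'I_p -> R) : R := \sum_(k < p) u k * v k.

Definition evec (p : nat) (k : 'I_p) : 'I_p -> R := fun l => (l == k)%:R.

(* inner product <u_1 /\ ... /\ u_j, v_1 /\ ... /\ v_j> on /\^j R^p
   (the one making the e_I orthonormal) *)
Definition wpair (j p : nat) (u v : 'I_j -> 'I_p -> R) : R :=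
  \det (\matrix_(a < j, b < j) dotv (u a) (v b)).

(* strictly increasing index maps, encoding subsets I with #I = j *)
Definition incr (a b : nat) (f : 'I_a -> 'I_b) : bool :=
  [forall x : 'I_a, forall y : 'I_a, (x < y)%N ==> (f x < f y)%N].

Definition rvecs (j p : nat) (w : 'M[int]_(j, p)) : 'I_j -> 'I_p -> R :=
  fun a b => (w a b)%:~R.

(* e_i + a_i in V = R^(m+l) (N = m+l-1, sigma = m-1);
   coordinates 0..sigma are the rows, sigma+1..N the columns of M *)
Definition xvec (m l : nat) (M : 'M[R]_(m, l)) (i : 'I_m) : 'I_(m + l) -> R :=
  fun k => match fintype.split k with inl r => (r == i)%:R | inr c => M i c end.

(* || pi_bullet(w) ||, w = w_1 /\ ... /\ w_j, j = k.+1 *)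
Definition pi_norm (m l k : nat) (w : 'M[int]_(k.+1, m + l)) : R :=
  Num.sqrt (\sum_(f : {ffun 'I_k.+1 -> 'I_(m + l)} |
                  incr f && [forall a, (m <= f a)%N])
              (wpair (fun a => evec (f a)) (rvecs w)) ^+ 2).

Definition xJ (m l k : nat) (M : 'M[R]_(m, l)) (i : 'I_m)
  (g : 'I_k -> 'I_(m + l)) : 'I_k.+1 -> 'I_(m + l) -> R :=
  fun a => if unlift ord0 a is Some c then evec (g c) else xvec M i.

(* || R_M c(w) ||, J ranging over (j-1)-subsets of {1..N} *)
Definition Rc_norm (m l k : nat) (M : 'M[R]_(m, l)) (w : 'M[int]_(k.+1, m + l)) : R :=
  Num.sqrt (\sum_(i < m)
     \sum_(g : {ffun 'I_k -> 'I_(m + l)} | incr g && [forall c, (0 < g c)%N])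
        (wpair (xJ M i g) (rvecs w)) ^+ 2).

Definition omega_adm (m l k : nat) (M : 'M[R]_(m, l)) (v : R) : Prop :=
  forall H : R, exists w : 'M[int]_(k.+1, m + l),
    [/\ row_free (map_mx (fun z : int => (z%:~R : R)) w),
        H < pi_norm w &
        Rc_norm M w < pi_norm w `^ (- ((v + 1 - k.+1%:R) / k.+1%:R))].

(* omega_j(M), for 1 <= j (we use k = j.-1, so j = k.+1) *)
Definition omega (m l : nat) (M : 'M[R]_(m, l)) (j : nat) : \bar R :=
  ereal_sup [set (v%:E) | v in [set v : R | omega_adm j.-1 M v]].

End HigherExponents.

From mathcomp Require Import all_boot all_order all_algebra.
From mathcomp Require Import all_classical all_reals all_analysis.
From mathcomp Require Import perm lra ring zify.
Import Order.TTheory GRing.Theory Num.Theory.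
Set Implicit Arguments. Unset Strict Implicit. Unset Printing Implicit Defensive.
Local Open Scope ring_scope.

(* Write x_i = e_i + a_i, so that the components of R_Mc(w) are the pairings
   <x_i /\ e_J, w> with 0 \notin J.  Deleting the row r of A amounts to
   forgetting the coordinate r of V: if w is good for A, the vector wdel w
   obtained by forgetting coordinate r has the same pi_bullet-norm, and every
   component of R_{A'}c(wdel w) is a component of R_Ac(w); hence
   omega_j(A) <= omega_j(A').
   Conversely, let D a_r = sum_q e_q a'_q with integers D > 0 and e_q.  Lift w'
   to wlift w', multiplying every coordinate by D and putting sum_q e_q w'_q in
   coordinate r.  Pairing with wlift w' is pairing with w' after the map T with
   T e_k = D e_k (k <> r) and T e_r = sum_q e_q e_q, so T x_i = D x'_i for
   i <> r and T x_r = sum_q e_q x'_q.  By multilinearity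
   R_Ac(wlift w') = O(R_{A'}c(w')), while pi_bullet(wlift w') = D^j pi_bullet(w');
   these constants cost an arbitrarily small loss in the exponent, hence
   omega_j(A') <= omega_j(A). *)

Section Wedge.
Variable R : realType.

Lemma eq_wpair_gram j p q (u W : 'I_j -> 'I_p -> R) (u' W' : 'I_j -> 'I_q -> R) :
  (forall a b, dotv (u a) (W b) = dotv (u' a) (W' b)) -> wpair u W = wpair u' W'.
Proof.
by move=> e; rewrite /wpair; congr (\det _); apply/matrixP => a b; rewrite !mxE.
Qed.

Lemma eq_wpair j p (u u' W : 'I_j -> 'I_p -> R) :
  (forall a x, u a x = u' a x) -> wpair u W = wpair u' W.
Proof.
by move=> e; apply: eq_wpair_gram => a b; apply: eq_bigr => x _; rewrite e.
Qed.

Lemma dotv_evecl p (k : 'I_p) (v : 'I_p -> R) : dotv (evec R k) v = v k.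
Proof.
rewrite /dotv (bigD1 k) //= /evec eqxx mul1r big1 ?addr0 // => x /negbTE ->.
by rewrite mul0r.
Qed.

Lemma normr_wpair_perm j p (u W : 'I_j -> 'I_p -> R) (s : 'S_j) :
  `|wpair (fun a => u (s a)) W| = `|wpair u W|.
Proof.
rewrite /wpair.
have -> : \matrix_(a, b) dotv (u (s a)) (W b) =
          row_perm s (\matrix_(a, b) dotv (u a) (W b)).
  by apply/matrixP => a b; rewrite !mxE.
by rewrite row_permE det_mulmx det_perm normrM normrX normrN1 expr1n mul1r.
Qed.

Lemma wpair_alternate j p (u W : 'I_j -> 'I_p -> R) (a1 a2 : 'I_j) :
  a1 != a2 -> (forall x, u a1 x = u a2 x) -> wpair u W = 0.
Proof.
move=> ne e; rewrite /wpair; apply: (determinant_alternate ne) => b.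
by rewrite !mxE /dotv; apply: eq_bigr => x _; rewrite e.
Qed.

Definition upd_slot j p (u : 'I_j -> 'I_p -> R) (a : 'I_j) (x : 'I_p -> R) :=
  fun b => if b == a then x else u b.

Lemma wpair_upd_add j p (u W : 'I_j -> 'I_p -> R) a (b c : R) x y :
  wpair (upd_slot u a (fun z => b * x z + c * y z)) W =
  b * wpair (upd_slot u a x) W + c * wpair (upd_slot u a y) W.
Proof.
have upd_out v v' : row' a (\matrix_(a', b') dotv (upd_slot u a v a') (W b')) =
                    row' a (\matrix_(a', b') dotv (upd_slot u a v' a') (W b')).
  by apply/matrixP => i t; rewrite !mxE /upd_slot !(eq_sym _ a) (negbTE (neq_lift a i)).
rewrite /wpair; apply: (determinant_multilinear _ (upd_out _ _) (upd_out _ _)).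
apply/rowP => t; rewrite !mxE /upd_slot eqxx /dotv !mulr_sumr -big_split /=.
by apply: eq_bigr => z _; ring.
Qed.

Lemma wpair_upd_sum j p (u W : 'I_j -> 'I_p -> R) a K (alpha : 'I_K -> R)
    (v : 'I_K -> 'I_p -> R) :
  wpair (upd_slot u a (fun z => \sum_(t < K) alpha t * v t z)) W =
  \sum_(t < K) alpha t * wpair (upd_slot u a (v t)) W.
Proof.
elim: K alpha v => [|K IH] alpha v.
  rewrite big_ord0 (eq_wpair (u' := upd_slot u a (fun z => 0 * u a z + 0 * u a z))).
    by rewrite wpair_upd_add !mul0r addr0.
  by move=> b z; rewrite /upd_slot; case: eqP => // _; rewrite big_ord0 !mul0r addr0.
rewrite big_ord_recr /= -[X in X + _]mul1r -IH -wpair_upd_add.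
apply: eq_wpair => b z; rewrite /upd_slot; case: eqP => // _.
by rewrite big_ord_recr /= mul1r.
Qed.

Lemma normr_wpair_expand_le j p (u W : 'I_j -> 'I_p -> R) a x K
    (alpha : 'I_K -> R) (v : 'I_K -> 'I_p -> R) (Bx Bv : R) :
  (forall z, u a z = x z + \sum_(t < K) alpha t * v t z) ->
  `|wpair (upd_slot u a x) W| <= Bx ->
  (forall t, `|wpair (upd_slot u a (v t)) W| <= Bv) ->
  `|wpair u W| <= Bx + (\sum_(t < K) `|alpha t|) * Bv.
Proof.
move=> ua hx hv.
have -> : wpair u W = wpair (upd_slot u a (fun z =>
    1 * x z + 1 * \sum_(t < K) alpha t * v t z)) W.
  by apply: eq_wpair => b z; rewrite /upd_slot; case: eqP => [->|//]; rewrite ua !mul1r.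
rewrite wpair_upd_add wpair_upd_sum !mul1r.
apply: (le_trans (ler_normD _ _)); apply: lerD => //.
apply: (le_trans (ler_norm_sum _ _ _)); rewrite mulr_suml; apply: ler_sum => t _.
by rewrite normrM; apply: ler_wpM2l.
Qed.

Definition bounded_comb p (G : ('I_p -> R) -> Prop) (M : R) (x : 'I_p -> R) :=
  exists K (alpha : 'I_K -> R) (v : 'I_K -> 'I_p -> R),
    [/\ forall z, x z = \sum_(t < K) alpha t * v t z,
        forall t, G (v t) & \sum_(t < K) `|alpha t| <= M].

Lemma bounded_comb1 p (G : ('I_p -> R) -> Prop) M (c : R) x y :
  G x -> `|c| <= M -> (forall z, y z = c * x z) -> bounded_comb G M y.
Proof.
move=> Gx cM yx; exists 1%N, (fun=> c), (fun=> x).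
by split=> // [z|]; rewrite big_ord1 ?yx.
Qed.

Lemma normr_wpair_le_comb j p (W : 'I_j -> 'I_p -> R)
    (G : 'I_j -> ('I_p -> R) -> Prop) (B M : R) :
  0 <= B -> (forall u, (forall a, G a (u a)) -> `|wpair u W| <= B) ->
  forall u, (forall a, bounded_comb (G a) M (u a)) -> `|wpair u W| <= B * M ^+ j.
Proof.
move=> B0 base.
suff H n : (n <= j)%N -> forall u,
    (forall a : 'I_j, (a < n)%N -> bounded_comb (G a) M (u a)) ->
    (forall a : 'I_j, (n <= a)%N -> G a (u a)) -> `|wpair u W| <= B * M ^+ n.
  by move=> u Hu; apply: H => // a; rewrite leqNgt ltn_ord.
elim: n => [|n IH] Hn u Hc HG; first by rewrite mulr1; apply: base => a; apply: HG.
pose a0 : 'I_j := Ordinal Hn.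
have [K [alpha [v [ua0 Gv sumM]]]] := Hc a0 (ltnSn n).
have M0 : 0 <= M by apply: le_trans sumM; apply: sumr_ge0.
have IHv y : G a0 y -> `|wpair (upd_slot u a0 y) W| <= B * M ^+ n.
  move=> Gy; apply: IH; first exact: ltnW.
    move=> a an; rewrite /upd_slot; case: eqP => [ea|_]; last by apply: Hc; apply: ltnW.
    by move: an; rewrite ea ltnn.
  move=> a na; rewrite /upd_slot; case: eqP => [->//|ne]; apply: HG.
  by rewrite ltn_neqAle na andbT; apply/eqP => e; apply: ne; apply: val_inj.
have -> : wpair u W = wpair (upd_slot u a0 (fun z => \sum_(t < K) alpha t * v t z)) W.
  by apply: eq_wpair => a z; rewrite /upd_slot; case: eqP => [->|//]; rewrite ua0.
rewrite wpair_upd_sum; apply: (le_trans (ler_norm_sum _ _ _)).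
apply: (le_trans (y := \sum_(t < K) `|alpha t| * (B * M ^+ n))).
  by apply: ler_sum => t _; rewrite normrM; apply: ler_wpM2l => //; apply: IHv.
by rewrite -mulr_suml exprS mulrCA ler_wpM2l // ler_wpM2r // exprn_ge0.
Qed.

Lemma wpair_scale j p (u W : 'I_j -> 'I_p -> R) (c : R) :
  wpair (fun a x => c * u a x) W = c ^+ j * wpair u W.
Proof.
rewrite /wpair -detZ; congr (\det _); apply/matrixP => a b; rewrite !mxE /dotv.
by rewrite mulr_sumr; apply: eq_bigr => x _; rewrite mulrA.
Qed.

End Wedge.

Lemma incr_sort_perm k p (h : 'I_k -> 'I_p) :
  injective h -> exists s : 'S_k, incr (fun c => h (s c)).
Proof.
move=> h_inj; set t := [tuple h c | c < k].
set st := sort (fun x y : 'I_p => (x <= y)%N) t.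
have [s Hs] : exists s : 'S_k, st = [tuple tnth t (s i) | i < k] :> seq _.
  by apply/tuple_permP; rewrite perm_sort.
exists s.
have st_sorted : sorted ltn (map val st).
  rewrite ltn_sorted_uniq_leq map_inj_uniq // sort_uniq sorted_map.
  rewrite map_inj_uniq ?enum_uniq //=.
  by apply: sort_sorted => x y; exact: leq_total.
have size_st : size st = k by rewrite size_sort size_tuple.
have hsE x : val (h (s x)) = nth 0%N (map val st) x.
  rewrite (nth_map (h (s x))) ?size_st // Hs.
  by rewrite -(tnth_nth (h (s x)) [tuple tnth t (s i) | i < k] x) !tnth_mktuple.
apply/forallP => x; apply/forallP => y; apply/implyP => xy.
by rewrite !hsE; apply: (sorted_ltn_nth ltn_trans); rewrite // inE size_map size_st.
Qed.

Section RcNormBounds.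
Variables (R : realType) (m l k : nat) (M : 'M[R]_(m, l)).
Variable w : 'M[int]_(k.+1, m + l).
Local Notation W := (rvecs R w).

Lemma xJ0 i (g : 'I_k -> 'I_(m + l)) : xJ M i g ord0 = xvec M i.
Proof. by rewrite /xJ unlift_none. Qed.

Lemma xJS i (g : 'I_k -> 'I_(m + l)) c : xJ M i g (lift ord0 c) = evec R (g c).
Proof. by rewrite /xJ liftK. Qed.

Lemma wpair_xJ_noninj i (h : 'I_k -> 'I_(m + l)) :
  ~~ injectiveb h -> wpair (xJ M i h) W = 0.
Proof.
case/injectivePn => c1 [c2 ne e].
apply: (@wpair_alternate _ _ _ _ _ (lift ord0 c1) (lift ord0 c2)).
  by rewrite (inj_eq (@lift_inj _ ord0)).
by move=> x; rewrite !xJS e.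
Qed.

Lemma normr_wpair_xJ_le i (h : 'I_k -> 'I_(m + l)) :
  (forall c, 0 < h c)%N -> `|wpair (xJ M i h) W| <= Rc_norm M w.
Proof.
move=> h_pos; have [h_inj|/(wpair_xJ_noninj i)->] := boolP (injectiveb h); last first.
  by rewrite normr0 sqrtr_ge0.
have [s s_incr] := incr_sort_perm (injectiveP _ h_inj).
pose g := [ffun c => h (s c)].
rewrite -(normr_wpair_perm _ _ (lift_perm ord0 ord0 s)) (eq_wpair (u' := xJ M i g)).
  have g_adm : incr g && [forall c, (0 < g c)%N].
    apply/andP; split; last by apply/forallP => c; rewrite ffunE.
    apply/forallP => x; apply/forallP => y; rewrite !ffunE.
    exact: (forallP (forallP s_incr x) y).
  rewrite /Rc_norm -sqrtr_sqr ler_wsqrtr // (bigD1 i) //= (bigD1 g) //= -addrA lerDl.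
  by rewrite addr_ge0 ?sumr_ge0 // => *; rewrite ?sumr_ge0 // => *; rewrite sqr_ge0.
move=> a x; case: (unliftP ord0 a) => [c ->|->].
  by rewrite lift_perm_lift !xJS ffunE.
by rewrite lift_perm_id !xJ0.
Qed.

Lemma upd_slot_xJ i (h : 'I_k -> 'I_(m + l)) c0 y b z :
  upd_slot (xJ M i h) (lift ord0 c0) (evec R y) b z =
  xJ M i (fun c => if c == c0 then y else h c) b z.
Proof.
rewrite /upd_slot; case: (unliftP ord0 b) => [c ->|->].
  by rewrite (inj_eq lift_inj) !xJS; case: eqP.
by rewrite eq_sym lift_eqF !xJ0.
Qed.

Lemma upd_slot_xJ_swap i i' (h : 'I_k -> 'I_(m + l)) c0 y b z :
  upd_slot (upd_slot (xJ M i h) (lift ord0 c0) (xvec M i')) ord0 (evec R y) b z =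
  xJ M i' (fun c => if c == c0 then y else h c) (tperm ord0 (lift ord0 c0) b) z.
Proof.
rewrite /upd_slot; case: tpermP => [->|->|/eqP b0 /eqP bc0].
- by rewrite eqxx xJS eqxx.
- by rewrite lift_eqF eqxx xJ0.
rewrite (negbTE b0) (negbTE bc0).
case: (unliftP ord0 b) b0 bc0 => [c -> _|->]; last by rewrite eqxx.
by rewrite (inj_eq lift_inj) !xJS => /negbTE ->.
Qed.

End RcNormBounds.

Section RcNormConst.
Variable R : realType.

Lemma xvecE m l (M : 'M[R]_(m, l)) i z :
  xvec M i z = evec R (lshift l i) z + \sum_(c < l) M i c * evec R (rshift m c) z.
Proof.
rewrite /xvec /evec; case: splitP => [j ej | c ec].
  have -> : z = lshift l j by apply: val_inj.
  by rewrite eq_lshift big1 ?addr0 // => c _; rewrite eq_lrshift mulr0.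
have -> : z = rshift m c by apply: val_inj.
rewrite eq_rlshift add0r (bigD1 c) //= eq_rshift eqxx mulr1 big1 ?addr0 // => d dc.
by rewrite eq_rshift eq_sym (negbTE dc) mulr0.
Qed.

Definition Rc_const m l (M : 'M[R]_(m, l)) : R := 1 + 2 * \sum_i \sum_c `|M i c|.

Variables (m l k : nat) (M : 'M[R]_(m.+1, l)) (w : 'M[int]_(k.+1, m.+1 + l)).
Local Notation W := (rvecs R w).

(* e_0 is not among the e_J of R_Mc: trade it for x_0 - a_0, then expand
   x_q = e_q + a_q instead. *)
Lemma normr_wpair_xJ_e0_le q (h : 'I_k -> 'I_(m.+1 + l)) c0 :
  injective h -> h c0 = lshift l ord0 ->
  `|wpair (xJ M q h) W| <=
    (1 + \sum_c `|M q c| + \sum_c `|M ord0 c|) * Rc_norm M w.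
Proof.
move=> h_inj hc0; set Rc := Rc_norm M w.
have Rc0 : 0 <= Rc by apply: sqrtr_ge0.
have hy_pos (y : 'I_(m.+1 + l)) : (0 < y)%N ->
    forall c, (0 < if c == c0 then y else h c)%N.
  move=> y_pos c; case: eqP => // /eqP cc0; rewrite lt0n.
  by apply: contra cc0 => /eqP hc; apply/eqP/h_inj; rewrite hc0; apply: val_inj.
set u := xJ M q h; set a0 : 'I_k.+1 := lift ord0 c0.
have u_a0 z : u a0 z = xvec M ord0 z + \sum_c (- M ord0 c) * evec R (rshift m.+1 c) z.
  rewrite /u xJS hc0 xvecE -addrA -big_split big1 ?addr0 // => c _.
  by rewrite /= mulNr addrN.
have Hv c : `|wpair (upd_slot u a0 (evec R (rshift m.+1 c))) W| <= Rc.
  by rewrite (eq_wpair _ (upd_slot_xJ M q h c0 _)) normr_wpair_xJ_le //; apply: hy_pos.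
have Hx : `|wpair (upd_slot u a0 (xvec M ord0)) W| <= (1 + \sum_c `|M q c|) * Rc.
  have [q0|q0] := eqVneq q ord0.
    rewrite (wpair_alternate W (a1 := ord0) (a2 := a0)) ?normr0 ?mulr_ge0 ?lift_eqF //.
    - by rewrite addr_ge0 ?sumr_ge0.
    - by move=> z; rewrite /upd_slot eqxx eq_sym lift_eqF /u xJ0 q0.
  have Hy (y : 'I_(m.+1 + l)) : (0 < y)%N ->
      `|wpair (upd_slot (upd_slot u a0 (xvec M ord0)) ord0 (evec R y)) W| <= Rc.
    move=> y_pos; rewrite (eq_wpair _ (upd_slot_xJ_swap M q ord0 h c0 _)).
    by rewrite normr_wpair_perm; apply: normr_wpair_xJ_le (hy_pos _ y_pos).
  rewrite mulrDl mul1r; apply: (normr_wpair_expand_le (a := ord0)).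
  - by move=> z; rewrite /upd_slot eq_sym lift_eqF /u xJ0 xvecE.
  - by apply: Hy; rewrite lt0n.
  - by move=> c; apply: Hy.
apply: le_trans (normr_wpair_expand_le u_a0 Hx Hv) _.
have -> : \sum_c `|- M ord0 c| = \sum_c `|M ord0 c|.
  by apply: eq_bigr => c _; rewrite normrN.
by rewrite [X in _ <= X]mulrDl.
Qed.

Lemma normr_wpair_xJ_le_const q (h : 'I_k -> 'I_(m.+1 + l)) :
  `|wpair (xJ M q h) W| <= Rc_const M * Rc_norm M w.
Proof.
set Rc := Rc_norm M w; set S := \sum_i \sum_c `|M i c|.
have Rc0 : 0 <= Rc by apply: sqrtr_ge0.
have rowS i : \sum_c `|M i c| <= S.
  by rewrite /S (bigD1 i) //= lerDl sumr_ge0 // => *; rewrite sumr_ge0.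
have S0 : 0 <= S by apply: le_trans (rowS ord0); rewrite sumr_ge0.
have C1 : 1 <= Rc_const M by rewrite /Rc_const -/S; lra.
have [/injectiveP h_inj|/(wpair_xJ_noninj M w q)->] := boolP (injectiveb h); last first.
  by rewrite normr0 mulr_ge0 //; lra.
case: (pickP (fun c => val (h c) == 0%N)) => [c0 /eqP hc0|h_neq0]; last first.
  apply: le_trans (normr_wpair_xJ_le M w q _) _ => [c|]; first by rewrite lt0n h_neq0.
  by rewrite ler_peMl.
apply: le_trans (normr_wpair_xJ_e0_le q h_inj (_ : h c0 = _)) _; first exact: val_inj.
have := rowS q; have := rowS ord0; rewrite /Rc_const -/S -/Rc; nra.
Qed.

End RcNormConst.

Lemma row_free_of_pi_norm_gt0 (R : realType) m l k (w : 'M[int]_(k.+1, m + l)) :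
  0 < pi_norm R w -> row_free (map_mx (fun z : int => (z%:~R : R)) w).
Proof.
set W := map_mx _ w => pi_gt0.
have [f f_adm f_nz] : exists2 f : {ffun 'I_k.+1 -> 'I_(m + l)},
    incr f && [forall a, (m <= f a)%N] & wpair (fun a => evec R (f a)) (rvecs R w) != 0.
  apply/exists_inP; apply: contraTT pi_gt0 => /exists_inPn f_zero.
  rewrite /pi_norm big1 ?sqrtr0 ?ltxx // => f /f_zero /negbNE /eqP ->.
  by rewrite expr0n.
have colsubE : colsub f W = W *m \matrix_(x, a) (x == f a)%:R.
  apply/matrixP => i a; rewrite !mxE (bigD1 (f a)) //= mxE eqxx mulr1.
  by rewrite big1 ?addr0 ?mxE // => x /negbTE; rewrite mxE => ->; rewrite mulr0.
have : colsub f W \in unitmx.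
  rewrite unitmxE unitfE -det_tr; apply: contraNneq f_nz => <-.
  by apply/eqP; congr (\det _); apply/matrixP => a b; rewrite !mxE dotv_evecl.
move/mxrank_unit; rewrite colsubE => rk.
by rewrite /row_free eqn_leq rank_leq_row -{1}rk mxrankM_maxl.
Qed.

Section SumsOverImage.
Variables (R : numDomainType) (I J : finType) (h : I -> J).
Hypothesis h_inj : injective h.

Lemma big_image_pred (P : pred I) (Q : pred J) (F : J -> R) :
  (forall i, Q (h i) = P i) -> (forall j, Q j -> exists i, j = h i) ->
  \sum_(j | Q j) F j = \sum_(i | P i) F (h i).
Proof.
move=> QP Qh; rewrite (eq_bigl (mem (h @: [set i | P i]))) ?big_imset.
- by apply: eq_bigl => i; rewrite finset.in_set.
- by move=> ? ? _ _ /h_inj.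
move=> j; apply/idP/imsetP => [Qj|[i]]; last first.
  by rewrite finset.in_set => Pi ->; rewrite QP.
by have [i ej] := Qh j Qj; exists i; rewrite // finset.in_set -QP -ej.
Qed.

Lemma ler_sum_image_pred (P : pred I) (Q : pred J) (F : J -> R) :
  (forall i, P i -> Q (h i)) -> (forall j, Q j -> 0 <= F j) ->
  \sum_(i | P i) F (h i) <= \sum_(j | Q j) F j.
Proof.
move=> PQ F_ge0; rewrite (bigID (mem (h @: [set i | P i])) Q) /=.
rewrite (big_image_pred (P := P)) ?lerDl ?sumr_ge0 // => [j /andP[/F_ge0]//|i|j].
  rewrite (mem_imset _ _ h_inj) finset.in_set andbC.
  by case Pi: (P i); rewrite //= PQ.
by case/andP=> _ /imsetP[i _ ->]; exists i.
Qed.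

End SumsOverImage.

Section RowDeletion.
Variables (R : realType) (m l : nat) (A : 'M[R]_(m.+1, l)) (r : 'I_m.+1).

Definition rowpos : 'I_(m.+1 + l) := lshift l r.

Definition skip_row (x : 'I_(m + l)) : 'I_(m.+1 + l) := lift rowpos x.

Lemma skip_row_inj : injective skip_row. Proof. exact: lift_inj. Qed.

Lemma skip_row_rshift c : skip_row (rshift m c) = rshift m.+1 c.
Proof.
apply: val_inj; rewrite /= /bump (leq_trans (_ : r <= m)%N) ?leq_addr //.
by rewrite -ltnS.
Qed.

Lemma skip_row_lshift i : skip_row (lshift l i) = lshift l (lift r i).
Proof. exact: val_inj. Qed.

Lemma rowpos_skip_row x : (rowpos == skip_row x) = false.
Proof. exact: negbTE (neq_lift _ _). Qed.

Lemma xvec_skip_row i x : xvec A (lift r i) (skip_row x) = xvec (row' r A) i x.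
Proof.
rewrite !xvecE /evec -skip_row_lshift (inj_eq skip_row_inj); congr (_ + _).
by apply: eq_bigr => c _; rewrite -skip_row_rshift (inj_eq skip_row_inj) mxE.
Qed.

Lemma xvec_rowpos i : xvec A (lift r i) rowpos = 0.
Proof.
rewrite xvecE /evec /rowpos eq_lshift (negbTE (neq_lift _ _)) add0r.
by rewrite big1 // => c _; rewrite eq_lrshift mulr0.
Qed.

Lemma evec_skip_row y x : evec R (skip_row y) (skip_row x) = evec R y x.
Proof. by rewrite /evec (inj_eq skip_row_inj). Qed.

Lemma evec_skip_row_rowpos y : evec R (skip_row y) rowpos = 0.
Proof. by rewrite /evec rowpos_skip_row. Qed.

Lemma dotv_skip_row (u v : 'I_(m.+1 + l) -> R) :
  dotv u v = u rowpos * v rowpos + dotv (u \o skip_row) (v \o skip_row).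
Proof. by rewrite /dotv (bigD1_ord rowpos). Qed.

Lemma skip_row_ge (x : 'I_(m + l)) : (m.+1 <= skip_row x)%N = (m <= x)%N.
Proof. by rewrite /= /bump; have := ltn_ord r; case: leqP => /=; lia. Qed.

Lemma skip_row_gt0 (x : 'I_(m + l)) : (0 < x)%N -> (0 < skip_row x)%N.
Proof. by rewrite /= /bump; case: leqP => /=; lia. Qed.

Definition skip_rows j (f : {ffun 'I_j -> 'I_(m + l)}) := [ffun a => skip_row (f a)].

Lemma skip_rows_inj j : injective (@skip_rows j).
Proof.
by move=> f g /ffunP fg; apply/ffunP => a; have := fg a; rewrite !ffunE => /skip_row_inj.
Qed.

Lemma incr_skip_rows j f : incr (@skip_rows j f) = incr f.
Proof.
by apply: eq_forallb => x; apply: eq_forallb => y; rewrite !ffunE /= !ltnNge leq_bump2.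
Qed.

Lemma big_skip_rows_ge k (F : {ffun 'I_k -> 'I_(m.+1 + l)} -> R) :
  \sum_(f : {ffun 'I_k -> 'I_(m.+1 + l)} | incr f && [forall a, (m.+1 <= f a)%N]) F f =
  \sum_(f : {ffun 'I_k -> 'I_(m + l)} | incr f && [forall a, (m <= f a)%N])
    F (skip_rows f).
Proof.
apply: (big_image_pred (@skip_rows_inj k)) => [f|g /andP[_ /forallP g_ge]].
  rewrite incr_skip_rows; congr andb; apply: eq_forallb => a.
  by rewrite ffunE skip_row_ge.
have [f fE] : exists f : 'I_k -> 'I_(m + l), forall a, g a = skip_row (f a).
  apply: (@fin_all_exists _ (fun=> _) (fun a y => g a = skip_row y)) => a.
  case: (unliftP rowpos (g a)) => [x ->|ga]; first by exists x.
  by have := g_ge a; rewrite ga /= leqNgt ltnS -ltnS ltn_ord.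
by exists [ffun a => f a]; apply/ffunP => a; rewrite !ffunE fE.
Qed.

Section DeleteCoordinate.
Variables (k : nat) (w : 'M[int]_(k.+1, m.+1 + l)).

Definition wdel : 'M[int]_(k.+1, m + l) := \matrix_(b, x) w b (skip_row x).

Lemma wpair_wdel (u : 'I_k.+1 -> 'I_(m.+1 + l) -> R) u' :
  (forall a, u a rowpos = 0) -> (forall a x, u a (skip_row x) = u' a x) ->
  wpair u (rvecs R w) = wpair u' (rvecs R wdel).
Proof.
move=> u0 uu'; apply: eq_wpair_gram => a b.
rewrite dotv_skip_row u0 mul0r add0r; apply: eq_bigr => x _.
by rewrite /= uu' /rvecs mxE.
Qed.

Lemma pi_norm_wdel : pi_norm R wdel = pi_norm R w.
Proof.
rewrite /pi_norm big_skip_rows_ge; congr Num.sqrt; apply: eq_bigr => f _.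
congr (_ ^+ 2); symmetry; apply: wpair_wdel => a *.
  by rewrite ffunE evec_skip_row_rowpos.
by rewrite ffunE evec_skip_row.
Qed.

Lemma Rc_norm_wdel_le : Rc_norm (row' r A) wdel <= Rc_norm A w.
Proof.
rewrite /Rc_norm; apply: ler_wsqrtr; rewrite (bigD1_ord r) //= -[X in X <= _]add0r.
apply: lerD; first by rewrite sumr_ge0 // => g _; rewrite sqr_ge0.
apply: ler_sum => i _.
have xJ_wdel (g : {ffun 'I_k -> 'I_(m + l)}) : wpair (xJ (row' r A) i g) (rvecs R wdel) =
                 wpair (xJ A (lift r i) (skip_rows g)) (rvecs R w).
  symmetry; apply: wpair_wdel => a; case: (unliftP ord0 a) => [c ->|->].
  - by rewrite xJS ffunE evec_skip_row_rowpos.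
  - by rewrite xJ0 xvec_rowpos.
  - by move=> x; rewrite !xJS ffunE evec_skip_row.
  - by move=> x; rewrite !xJ0 xvec_skip_row.
under eq_bigr do rewrite xJ_wdel.
apply: (ler_sum_image_pred (@skip_rows_inj k)
  (F := fun g => wpair (xJ A (lift r i) g) (rvecs R w) ^+ 2)) => [g|g _].
- rewrite incr_skip_rows => /andP[-> /forallP g_pos]; apply/forallP => c.
  by rewrite ffunE skip_row_gt0.
- exact: sqr_ge0.
Qed.

End DeleteCoordinate.

Lemma omega_adm_row' k v : omega_adm k A v -> omega_adm k (row' r A) v.
Proof.
move=> adm H; have [w [_ H_lt Rc_lt]] := adm (Num.max H 0).
rewrite -(pi_norm_wdel w) in H_lt Rc_lt.
exists (wdel w); split.
- by apply: row_free_of_pi_norm_gt0; apply: le_lt_trans H_lt; rewrite le_max lexx orbT.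
- by apply: le_lt_trans H_lt; rewrite le_max lexx.
- exact: le_lt_trans (Rc_norm_wdel_le w) Rc_lt.
Qed.

Lemma omega_le_row' j : (omega A j <= omega (row' r A) j)%E.
Proof. by apply: ereal_sup_le => _ [v adm <-]; exists v => //; apply: omega_adm_row'. Qed.

End RowDeletion.

Lemma powR_absorb_const (R : realType) (K c e1 e2 : R) :
  0 <= K -> 1 <= c -> e2 < e1 ->
  exists2 P, 0 < P & forall p x, P <= p -> 0 <= x -> x < p `^ (- e1) ->
    K * x < (c * p) `^ (- e2).
Proof.
move=> K_ge0 c_ge1 e21; set d := e1 - e2; set Q := (K + 1) * c `^ e2.
have c_gt0 : 0 < c by lra.
have d_neq0 : d != 0 by rewrite subr_eq0 gt_eqF.
have ce2_gt0 : 0 < c `^ e2 by apply: powR_gt0.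
have Q_ge0 : 0 <= Q by rewrite mulr_ge0 ?ltW //; lra.
exists (Num.max 1 (Q `^ d^-1)) => [|p x]; first by rewrite lt_max ltr01.
rewrite ge_max => /andP[p_ge1 Qp] x_ge0 x_lt.
have p_gt0 : 0 < p by lra.
have Q_le : Q <= p `^ d.
  have -> : Q = (Q `^ d^-1) `^ d by rewrite -powRrM mulVf ?powRr1.
  by apply: ge0_ler_powR; rewrite ?nnegrE ?powR_ge0 // ?ltW // subr_gt0.
have -> : (c * p) `^ (- e2) = (c `^ e2)^-1 * p `^ d * p `^ (- e1).
  rewrite powRM ?ltW // powRN -mulrA -powRD; last by rewrite (gt_eqF p_gt0) implybT.
  by congr (_ * p `^ _); rewrite /d; ring.
apply: (le_lt_trans (y := (K + 1) * x)); first by rewrite ler_wpM2r // lerDl.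
apply: (lt_le_trans (y := (K + 1) * p `^ (- e1))); first by rewrite ltr_pM2l //; lra.
have -> : K + 1 = (c `^ e2)^-1 * Q by rewrite /Q mulrCA mulVf ?mulr1 ?gt_eqF.
by rewrite ler_wpM2r ?powR_ge0 // ler_wpM2l // invr_ge0 ltW.
Qed.

Section RowReinsertion.
Variables (R : realType) (m l : nat) (A : 'M[R]_(m.+2, l)) (r : 'I_m.+2).
Variables (D : int) (e : 'I_m.+1 -> int).
Hypothesis D_gt0 : 0 < D.
Hypothesis row_r_comb : forall c, D%:~R * A r c = \sum_q (e q)%:~R * row' r A q c.

Local Notation A' := (row' r A).
Local Notation rowpos := (rowpos l r).
Local Notation skip_row := (skip_row r).

Definition row_comb : 'I_(m.+1 + l) -> R :=
  fun x => \sum_q (e q)%:~R * evec R (lshift l q) x.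

Definition wlift_adj (u : 'I_(m.+2 + l) -> R) : 'I_(m.+1 + l) -> R :=
  fun x => D%:~R * u (skip_row x) + u rowpos * row_comb x.

Definition wlift k (w : 'M[int]_(k.+1, m.+1 + l)) : 'M[int]_(k.+1, m.+2 + l) :=
  \matrix_(b, x) if unlift rowpos x is Some y then D * w b y
                 else \sum_q e q * w b (lshift l q).

Lemma dotv_row_comb (v : 'I_(m.+1 + l) -> R) :
  dotv row_comb v = \sum_q (e q)%:~R * v (lshift l q).
Proof.
rewrite /dotv /row_comb; under eq_bigr do rewrite mulr_suml.
rewrite exchange_big /=; apply: eq_bigr => q _.
by rewrite -dotv_evecl /dotv mulr_sumr; apply: eq_bigr => x _; rewrite mulrA.
Qed.

Lemma wpair_wlift k (u : 'I_k.+1 -> 'I_(m.+2 + l) -> R) w :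
  wpair u (rvecs R (wlift w)) = wpair (fun a => wlift_adj (u a)) (rvecs R w).
Proof.
apply: eq_wpair_gram => a b; rewrite (dotv_skip_row r) /rvecs mxE unlift_none.
transitivity (u a rowpos * dotv row_comb (fun x => (w b x)%:~R) +
              dotv (fun x => D%:~R * u a (skip_row x)) (fun x => (w b x)%:~R)).
  rewrite dotv_row_comb rmorph_sum !mulr_sumr; congr (_ + _).
    by apply: eq_bigr => q _; rewrite /= intrM mulrA.
  by apply: eq_bigr => x _; rewrite /= mxE liftK intrM; ring.
rewrite /dotv mulr_sumr -big_split /=; apply: eq_bigr => x _.
by rewrite /wlift_adj; ring.
Qed.

Lemma wlift_adj_evec_skip_row y x :
  wlift_adj (evec R (skip_row y)) x = D%:~R * evec R y x.
Proof. by rewrite /wlift_adj evec_skip_row evec_skip_row_rowpos mul0r addr0. Qed.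

Lemma wlift_adj_evec_rowpos x : wlift_adj (evec R rowpos) x = row_comb x.
Proof. by rewrite /wlift_adj /evec eqxx mul1r eq_sym rowpos_skip_row mulr0 add0r. Qed.

Lemma wlift_adj_xvec_lift i x : wlift_adj (xvec A (lift r i)) x = D%:~R * xvec A' i x.
Proof. by rewrite /wlift_adj xvec_skip_row xvec_rowpos mul0r addr0. Qed.

Lemma wlift_adj_xvec_r x : wlift_adj (xvec A r) x = \sum_q (e q)%:~R * xvec A' q x.
Proof.
have xr_rowpos : xvec A r rowpos = 1.
  by rewrite xvecE /evec eqxx big1 ?addr0 // => c _; rewrite eq_lrshift mulr0.
have xr_skip_row : xvec A r (skip_row x) = \sum_c A r c * evec R (rshift m.+1 c) x.
  rewrite xvecE /evec eq_sym rowpos_skip_row add0r; apply: eq_bigr => c _.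
  by rewrite -(skip_row_rshift r) (inj_eq (@skip_row_inj _ _ r)).
rewrite /wlift_adj xr_rowpos xr_skip_row mul1r mulr_sumr /row_comb.
under [RHS]eq_bigr do rewrite xvecE mulrDr mulr_sumr.
rewrite big_split addrC /=; congr (_ + _); rewrite exchange_big /=.
apply: eq_bigr => c _; rewrite mulrA row_r_comb mulr_suml.
by apply: eq_bigr => q _; rewrite mxE; ring.
Qed.

Definition comb_norm : R := D%:~R + \sum_q `|(e q)%:~R : R|.

Lemma normr_wpair_xJ_wlift_le k (w : 'M[int]_(k.+1, m.+1 + l)) i
    (g : 'I_k -> 'I_(m.+2 + l)) :
  `|wpair (xJ A i g) (rvecs R (wlift w))| <=
    Rc_const A' * Rc_norm A' w * comb_norm ^+ k.+1.
Proof.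
have D_ge0 : 0 <= D%:~R :> R by rewrite ler0z ltW.
have e_ge0 : 0 <= \sum_q `|(e q)%:~R : R| by rewrite sumr_ge0.
have D_le : `|D%:~R| <= comb_norm by rewrite ger0_norm // lerDl.
have e_le : \sum_q `|(e q)%:~R : R| <= comb_norm by rewrite lerDr.
rewrite wpair_wlift.
pose G (a : 'I_k.+1) (v : 'I_(m.+1 + l) -> R) :=
  if a == ord0 then exists q, v = xvec A' q else exists y, v = evec R y.
apply: (normr_wpair_le_comb (G := G)) => [|u Gu|a].
- rewrite mulr_ge0 ?sqrtr_ge0 // /Rc_const addr_ge0 // mulr_ge0 //.
  by rewrite sumr_ge0 // => *; rewrite sumr_ge0.
- have [q u0] : exists q, u ord0 = xvec A' q by have := Gu ord0; rewrite /G eqxx.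
  have [h uS] : exists h : 'I_k -> 'I_(m.+1 + l),
      forall c, u (lift ord0 c) = evec R (h c).
    apply: (@fin_all_exists _ (fun=> _) (fun c y => u (lift ord0 c) = evec R y)) => c.
    by have := Gu (lift ord0 c); rewrite /G lift_eqF.
  rewrite (eq_wpair (u' := xJ A' q h)); first exact: normr_wpair_xJ_le_const.
  by move=> b x; case: (unliftP ord0 b) => [c ->|->]; rewrite ?xJS ?xJ0 ?uS ?u0.
rewrite /G; case: (unliftP ord0 a) => [c ->|->].
  rewrite lift_eqF xJS.
  case: (unliftP rowpos (g c)) => [y ->|->].
    apply: (@bounded_comb1 _ _ _ _ D%:~R (evec R y)) => // [|z]; first by exists y.
    exact: wlift_adj_evec_skip_row.
  exists m.+1, (fun q => (e q)%:~R), (fun q => evec R (lshift l q)).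
  by split=> // [x|q]; [rewrite wlift_adj_evec_rowpos | exists (lshift l q)].
rewrite eqxx xJ0; case: (unliftP r i) => [i' ->|->].
  by apply: (@bounded_comb1 _ _ _ _ D%:~R (xvec A' i')) => // [|x];
    [exists i' | rewrite wlift_adj_xvec_lift].
exists m.+1, (fun q => (e q)%:~R), (fun q => xvec A' q).
by split=> // [x|q]; [rewrite wlift_adj_xvec_r | exists q].
Qed.

Lemma pi_norm_wlift k (w : 'M[int]_(k.+1, m.+1 + l)) :
  pi_norm R (wlift w) = (D%:~R) ^+ k.+1 * pi_norm R w.
Proof.
have D_ge0 : 0 <= D%:~R :> R by rewrite ler0z ltW.
rewrite /pi_norm (big_skip_rows_ge r).
under eq_bigr => f _.
  rewrite wpair_wlift (eq_wpair (u' := fun a x => D%:~R * evec R (f a) x)).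
    by rewrite wpair_scale exprMn over.
  by move=> a x; rewrite ffunE wlift_adj_evec_skip_row.
by rewrite -mulr_sumr sqrtrM ?exprn_ge0 // sqrtr_sqr ger0_norm // exprn_ge0.
Qed.

Lemma Rc_norm_wlift_le k :
  exists2 C, 0 <= C & forall w : 'M[int]_(k.+1, m.+1 + l),
    Rc_norm A (wlift w) <= C * Rc_norm A' w.
Proof.
set K := Rc_const A' * comb_norm ^+ k.+1.
set N := \sum_(i < m.+2) \sum_(g : {ffun 'I_k -> 'I_(m.+2 + l)} |
           incr g && [forall c, (0 < g c)%N]) (1 : R).
have K_ge0 : 0 <= K.
  rewrite mulr_ge0 ?exprn_ge0 // ?addr_ge0 ?mulr_ge0 ?sumr_ge0 ?ler0z ?ltW //.
  by move=> *; rewrite sumr_ge0.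
exists (Num.sqrt N * K); first by rewrite mulr_ge0 ?sqrtr_ge0.
move=> w; have Rc_ge0 : 0 <= Rc_norm A' w by apply: sqrtr_ge0.
have N_ge0 : 0 <= N by rewrite !sumr_ge0.
rewrite -mulrA -(ger0_norm (mulr_ge0 K_ge0 Rc_ge0)) -sqrtr_sqr -sqrtrM //.
rewrite /Rc_norm; apply: ler_wsqrtr; rewrite /N !mulr_suml; apply: ler_sum => i _.
apply: ler_sum => g _; rewrite mul1r -[X in X <= _]real_normK ?num_real // !expr2.
have := normr_wpair_xJ_wlift_le w i g; rewrite mulrAC => bound.
by apply: ler_pM.
Qed.

Lemma omega_adm_wlift k (v v' : R) : v' < v -> omega_adm k A' v -> omega_adm k A v'.
Proof.
move=> v'_lt adm H.
have k_gt0 : (0 : R) < k.+1%:R by rewrite ltr0n.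
have e21 : (v' + 1 - k.+1%:R) / k.+1%:R < (v + 1 - k.+1%:R) / k.+1%:R.
  by rewrite ltr_pM2r ?invr_gt0 //; lra.
have [C C_ge0 Rc_le] := Rc_norm_wlift_le k.
have Dk_ge1 : 1 <= (D%:~R : R) ^+ k.+1 by rewrite exprn_ege1 // ler1z.
have [P P_gt0 absorb] := powR_absorb_const C_ge0 Dk_ge1 e21.
have [w [_ w_big Rc_lt]] := adm (Num.max H P).
move: w_big; rewrite gt_max => /andP[H_lt P_lt].
have pi_gt0 : 0 < pi_norm R w by apply: lt_trans P_lt.
exists (wlift w); rewrite pi_norm_wlift; split.
- by apply: row_free_of_pi_norm_gt0; rewrite pi_norm_wlift mulr_gt0 // exprn_gt0 // ltr0z.
- by apply: lt_le_trans H_lt _; rewrite ler_peMl // ltW.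
- apply: le_lt_trans (Rc_le w) (absorb _ _ (ltW P_lt) _ Rc_lt).
  exact: sqrtr_ge0.
Qed.

Lemma omega_ge_row' j : (omega A' j <= omega A j)%E.
Proof.
apply: ge_ereal_sup => _ [v adm <-]; apply/lee_subgt0Pr => eps eps_gt0.
rewrite -EFinB; apply: ereal_sup_ubound; exists (v - eps) => //.
by apply: omega_adm_wlift adm; rewrite ltrBlDr ltrDl.
Qed.

End RowReinsertion.

Lemma rat_common_denom (R : numFieldType) s (c : 'I_s -> rat) :
  exists2 D : int, 0 < D &
    exists e : 'I_s -> int, forall q, ((e q)%:~R : R) = D%:~R * ratr (c q).
Proof.
exists (\prod_q denq (c q)); first by apply: prodr_gt0 => q _; apply: denq_gt0.
exists (fun q => numq (c q) * \prod_(q' | q' != q) denq (c q')) => q.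
have numqE' : (numq (c q))%:~R = ratr (c q) * (denq (c q))%:~R :> R.
  by rewrite -[(denq _)%:~R](ratr_int R) -rmorphM /= -numqE ratr_int.
by rewrite [in RHS](bigD1 q) //= !rmorphM /= numqE'; ring.
Qed.

Unset Implicit Arguments.

Theorem lemma5p7 (R : realType) (s n : nat) (A : 'M[R]_(s.+1, n - s))
    (r : 'I_s.+1) :
  (1 <= s)%N -> (s < n)%N ->
  (forall j : nat, (1 <= j <= n - s)%N ->
     (omega A j <= omega (row' r A) j)%E) /\
  ((exists c : 'I_s -> rat,
      row r A = \sum_(k < s) ratr (c k) *: row k (row' r A)) ->
   forall j : nat, (1 <= j <= n - s)%N ->
     omega (row' r A) j = omega A j).
Proof.
case: s A r => [|s] A r // _ _.
split=> [j _|[c row_r] j _]; first exact: omega_le_row'.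
have [D D_gt0 [e eE]] := rat_common_denom R c.
have row_r_comb col : D%:~R * A r col = \sum_q (e q)%:~R * row' r A q col.
  have := congr1 (fun M : 'M[R]_(1, n - s.+1) => M 0 col) row_r.
  rewrite !mxE summxE => ->; rewrite mulr_sumr; apply: eq_bigr => q _.
  by rewrite !mxE eE mulrA.
by apply/eqP; rewrite eq_le (omega_ge_row' D_gt0 row_r_comb) omega_le_row'.
Qed.
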